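(* Let $r$ and $s$ be typical subranks of tensors in $\mathbb{R}^{n_1} \otimes \mathbb{R}^{n_2} \otimes \mathbb{R}^{n_3}$ with $r \leq s$. Then every integer $l$ with $r \leq l \leq s$ is also a typical subrank of tensors in $\mathbb{R}^{n_1} \otimes \mathbb{R}^{n_2} \otimes \mathbb{R}^{n_3}$.
   Context: For $r \geq 0$ let $I_r := \sum_{j=1}^r e_j \otimes e_j \otimes e_j \in (\mathbb{R}^r)^{\otimes 3}$. The subrank of $T \in \mathbb{R}^{n_1} \otimes \mathbb{R}^{n_2} \otimes \mathbb{R}^{n_3}$ is $Q(T) := \max\{ r \mid \exists\ \mathbb{R}\text{-linear } \varphi_i : \mathbb{R}^{n_i} \to \mathbb{R}^r,\ (\varphi_1 \otimes \varphi_2 \otimes \varphi_3) T = I_r\}$. An integer $r$ is a typical subrank (of the format $n_1\times n_2\times n_3$) if the set $\{T \in \mathbb{R}^{n_1} \otimes \mathbb{R}^{n_2} \otimes \mathbb{R}^{n_3} \mid Q(T) = r\}$ contains a nonempty open subset in the Euclidean topology. *)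

From HB Require Import structures.
From mathcomp Require Import all_boot all_order all_algebra.
From mathcomp Require Import reals.
Set Implicit Arguments. Unset Strict Implicit. Unset Printing Implicit Defensive.
Import Order.TTheory GRing.Theory Num.Theory.
Local Open Scope ring_scope.

Definition tensor (R : realType) (n1 n2 n3 : nat) := 'I_n1 -> 'I_n2 -> 'I_n3 -> R.

Definition tensor_map (R : realType) (n1 n2 n3 m1 m2 m3 : nat)
  (A1 : 'M[R]_(m1, n1)) (A2 : 'M[R]_(m2, n2)) (A3 : 'M[R]_(m3, n3))
  (T : tensor R n1 n2 n3) : tensor R m1 m2 m3 :=
  fun a b c => \sum_(i < n1) \sum_(j < n2) \sum_(k < n3)
                 A1 a i * A2 b j * A3 c k * T i j k.

Definition unit_tensor (R : realType) (r : nat) : tensor R r r r :=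
  fun a b c => if (a == b) && (b == c) then 1 else 0.

Definition restricts_to_unit (R : realType) (n1 n2 n3 : nat)
  (T : tensor R n1 n2 n3) (r : nat) : Prop :=
  exists (A1 : 'M[R]_(r, n1)) (A2 : 'M[R]_(r, n2)) (A3 : 'M[R]_(r, n3)),
    forall a b c, tensor_map A1 A2 A3 T a b c = @unit_tensor R r a b c.

Definition subrank_is (R : realType) (n1 n2 n3 : nat)
  (T : tensor R n1 n2 n3) (r : nat) : Prop :=
  restricts_to_unit T r /\ (forall r', restricts_to_unit T r' -> (r' <= r)%N).

Definition tensor_dist2 (R : realType) (n1 n2 n3 : nat)
  (T S : tensor R n1 n2 n3) : R :=
  \sum_(i < n1) \sum_(j < n2) \sum_(k < n3) (T i j k - S i j k) ^+ 2.

(* r is a typical subrank of format n1 x n2 x n3: {T | Q(T) = r} contains a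
   nonempty Euclidean-open set, i.e. (equivalently, since open balls form a
   basis of the Euclidean topology) contains an open Euclidean ball. *)
Definition typical_subrank (R : realType) (n1 n2 n3 r : nat) : Prop :=
  exists (T0 : tensor R n1 n2 n3) (eps : R), 0 < eps /\
    forall T : tensor R n1 n2 n3, tensor_dist2 T T0 < eps ^+ 2 -> subrank_is T r.

From mathcomp Require Import all_boot all_order all_algebra.
From mathcomp Require Import reals.
From mathcomp Require Import ordered_qelim qe_rcf.
From mathcomp Require Import ring lra.
From Stdlib Require Import Classical.

(* Changing one entry of a tensor is a rank-one perturbation, and spending one
   row of each restriction map to cancel it shows that this lowers the subrank
   by at most one.  By real quantifier elimination each set {T | Q(T) >= k} is
   semialgebraic, so every nonempty open set of tensors contains a nonempty
   open subset on which Q is constant.  Starting from an open set on which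
   Q = r, move the entries one at a time towards a tensor with Q = s, shrinking
   the open set at each step so that Q stays constant on it: the constant goes
   from r to s and increases by at most one at each step, so it takes the value
   l on some nonempty open set. *)

Set Implicit Arguments. Unset Strict Implicit. Unset Printing Implicit Defensive.
Import Order.TTheory GRing.Theory Num.Theory.
Local Open Scope ring_scope.

Section SupTopology.
Variables (R : realFieldType) (I : finType).
Implicit Types (x y S : I -> R) (U W P Q : (I -> R) -> Prop) (f g : (I -> R) -> R).

Definition supball x (d : R) y := forall i, `|y i - x i| < d.

Definition locally x P := exists2 d, 0 < d & forall y, supball x d y -> P y.

Definition open U := forall x, U x -> locally x U.

Definition continuous f := forall x e, 0 < e -> locally x (fun y => `|f y - f x| < e).

Definition translate S x : I -> R := fun i => x i + S i.

Definition sqdist x y := \sum_i (x i - y i) ^+ 2.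

Lemma locally_mono x P Q : (forall y, P y -> Q y) -> locally x P -> locally x Q.
Proof. by move=> PQ [d d0 hd]; exists d => // y /hd /PQ. Qed.

Lemma locallyI x P Q : locally x P -> locally x Q -> locally x (fun y => P y /\ Q y).
Proof.
move=> [d1 d10 h1] [d2 d20 h2]; exists (Num.min d1 d2); first by rewrite lt_min d10 d20.
by move=> y hy; split; [apply: h1 | apply: h2] => i;
  rewrite (lt_le_trans (hy i)) // ge_min lexx ?orbT.
Qed.

Lemma open_ext U x y : open U -> U x -> (forall i, x i = y i) -> U y.
Proof. by move=> oU /oU [d d0 hd] xy; apply: hd => i; rewrite xy subrr normr0. Qed.

Lemma openI U W : open U -> open W -> open (fun x => U x /\ W x).
Proof. by move=> oU oW x [/oU hU /oW hW]; apply: locallyI. Qed.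

Lemma open_translate U S : open U -> open (fun x => U (translate S x)).
Proof.
move=> oU x /oU [d d0 hd]; exists d => // y hy; apply: hd => i.
rewrite /translate opprD addrACA subrr addr0; exact: hy.
Qed.

Lemma continuous_ext f g : (forall x, f x = g x) -> continuous f -> continuous g.
Proof. by move=> fg cf x e e0; apply: locally_mono (cf x e e0) => y; rewrite !fg. Qed.

Lemma continuous_const c : continuous (fun _ => c).
Proof. by move=> x e e0; exists 1 => // y _; rewrite subrr normr0. Qed.

Lemma continuous_coord i : continuous (fun x => x i).
Proof. by move=> x e e0; exists e => // y /(_ i). Qed.

Lemma continuousD f g : continuous f -> continuous g -> continuous (fun x => f x + g x).
Proof.
move=> cf cg x e e0; have e20 : 0 < e / 2 by rewrite divr_gt0.
apply: locally_mono (locallyI (cf x _ e20) (cg x _ e20)) => y [hf hg].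
rewrite opprD addrACA (le_lt_trans (ler_normD _ _)) //; lra.
Qed.

Lemma continuousN f : continuous f -> continuous (fun x => - f x).
Proof. by move=> cf x e /(cf x); apply: locally_mono => y; rewrite -opprD normrN. Qed.

Lemma continuousM f g : continuous f -> continuous g -> continuous (fun x => f x * g x).
Proof.
move=> cf cg x e e0.
have c0 : 0 < `|f x| + `|g x| + 1 by rewrite ltr_wpDl ?addr_ge0.
set d := Num.min 1 (e / (`|f x| + `|g x| + 1)).
have d0 : 0 < d by rewrite lt_min ltr01 divr_gt0.
have d1 : d <= 1 by rewrite ge_min lexx.
have de : d * (`|f x| + `|g x| + 1) <= e by rewrite -ler_pdivlMr // ge_min lexx orbT.
apply: locally_mono (locallyI (cf x _ d0) (cg x _ d0)) => y [hf hg].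
have -> : f y * g y - f x * g x =
    (f y - f x) * (g y - g x) + f x * (g y - g x) + g x * (f y - f x) by ring.
have := ler_normD ((f y - f x) * (g y - g x) + f x * (g y - g x)) (g x * (f y - f x)).
have := ler_normD ((f y - f x) * (g y - g x)) (f x * (g y - g x)).
rewrite !normrM.
have := normr_ge0 (f y - f x); have := normr_ge0 (g y - g x).
have := normr_ge0 (f x); have := normr_ge0 (g x).
nra.
Qed.

Lemma continuousMn f n : continuous f -> continuous (fun x => f x *+ n).
Proof.
move=> cf; elim: n => [|n IH].
  by apply: continuous_ext (continuous_const 0) => x; rewrite mulr0n.
by apply: continuous_ext (continuousD cf IH) => x; rewrite mulrS.
Qed.

Lemma continuousX f n : continuous f -> continuous (fun x => f x ^+ n).
Proof.
move=> cf; elim: n => [|n IH].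
  by apply: continuous_ext (continuous_const 1) => x; rewrite expr0.
by apply: continuous_ext (continuousM cf IH) => x; rewrite exprS.
Qed.

Lemma continuous_sum (J : finType) (F : J -> (I -> R) -> R) :
  (forall j, continuous (F j)) -> continuous (fun x => \sum_j F j x).
Proof.
move=> cF; elim: (index_enum J) => [|j s IH].
  by apply: continuous_ext (continuous_const 0) => x; rewrite big_nil.
by apply: continuous_ext (continuousD (cF j) IH) => x; rewrite big_cons.
Qed.

Lemma continuous_sqdist y : continuous (sqdist^~ y).
Proof.
apply: continuous_sum => i.
exact: continuousX (continuousD (continuous_coord i) (continuous_const _)).
Qed.

Lemma sqr_le_sqdist x y i : (x i - y i) ^+ 2 <= sqdist x y.
Proof. by rewrite /sqdist (bigD1 i) //= lerDl sumr_ge0 // => j _; apply: sqr_ge0. Qed.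

Lemma open_lt f g : continuous f -> continuous g -> open (fun x => f x < g x).
Proof.
move=> cf cg x fg; have e0 : 0 < g x - f x by rewrite subr_gt0.
apply: locally_mono (continuousD cg (continuousN cf) x e0) => y.
rewrite ltr_norml => /andP[h _]; rewrite -subr_gt0; lra.
Qed.

Lemma open_neq f g : continuous f -> continuous g -> open (fun x => f x <> g x).
Proof.
move=> cf cg x /eqP; rewrite neq_lt => /orP[lt|lt].
  by apply: locally_mono (open_lt cf cg lt) => y hy fg; rewrite fg ltxx in hy.
by apply: locally_mono (open_lt cg cf lt) => y hy fg; rewrite fg ltxx in hy.
Qed.

Definition generically_constant P :=
  forall U, open U -> (exists x, U x) ->
  exists W, [/\ open W, (exists x, W x), (forall x, W x -> U x) &
                forall x y, W x -> W y -> (P x <-> P y)].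

Lemma generically_constant_ext P Q :
  (forall x, P x <-> Q x) -> generically_constant P -> generically_constant Q.
Proof.
move=> PQ gP U oU neU; have [W [oW neW WU cW]] := gP U oU neU.
by exists W; split=> // x y Wx Wy; move: (cW x y Wx Wy) (PQ x) (PQ y); tauto.
Qed.

Lemma generically_constant_const (p : Prop) : generically_constant (fun _ => p).
Proof. by move=> U oU neU; exists U; split=> // x y _ _; exact: iff_refl. Qed.

Lemma open_generically_constant P : open P -> generically_constant P.
Proof.
move=> oP U oU [x0 Ux0].
have [[x [Ux Px]] | noP] := classic (exists x, U x /\ P x).
  exists (fun x => U x /\ P x); split; first exact: openI.
  - by exists x.
  - by move=> y [].
  - by move=> y z [_ Py] [_ Pz].
exists U; split=> //; first by exists x0.
by move=> y z Uy Uz; split=> h; case: noP; [exists y | exists z].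
Qed.

Lemma generically_constantN P :
  generically_constant P -> generically_constant (fun x => ~ P x).
Proof.
move=> gP U oU neU; have [W [oW neW WU cW]] := gP U oU neU.
by exists W; split=> // x y Wx Wy; move: (cW x y Wx Wy); tauto.
Qed.

Lemma generically_constant2 (C : Prop -> Prop -> Prop) P Q :
  (forall p q p' q', (p <-> p') -> (q <-> q') -> (C p q <-> C p' q')) ->
  generically_constant P -> generically_constant Q ->
  generically_constant (fun x => C (P x) (Q x)).
Proof.
move=> congrC gP gQ U oU neU.
have [W1 [oW1 neW1 W1U cP]] := gP U oU neU.
have [W2 [oW2 neW2 W21 cQ]] := gQ W1 oW1 neW1.
exists W2; split=> // [x /W21 /W1U // | x y Wx Wy].
by apply: congrC; [apply: cP | apply: cQ] => //; apply: W21.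
Qed.

Lemma generically_constant_translate P S :
  generically_constant P -> generically_constant (fun x => P (translate S x)).
Proof.
move=> gP U oU [x0 Ux0].
have oU' : open (fun y => U (translate (fun i => - S i) y)) by apply: open_translate.
have [|W [oW [y0 Wy0] WU cW]] := gP _ oU'.
  by exists (translate S x0); apply: (open_ext oU Ux0) => i; rewrite /translate addrK.
exists (fun x => W (translate S x)); split.
- exact: open_translate.
- exists (translate (fun i => - S i) y0); apply: (open_ext oW Wy0) => i.
  by rewrite /translate subrK.
- by move=> x /WU Ux; apply: (open_ext oU Ux) => i; rewrite /translate addrK.
- by move=> x y Wx Wy; apply: cW.
Qed.

End SupTopology.

Section Semialgebraic.
Variables (R : realFieldType) (I : finType).

Definition coords (x : I -> R) : seq R := [seq x i | i <- enum I].

Lemma size_coords x : size (coords x) = #|I|.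
Proof. by rewrite size_map -cardE. Qed.

Lemma nth_coords x i : nth 0 (coords x) (enum_rank i) = x i.
Proof. by rewrite (nth_map i) ?nth_enum_rank // -cardE ltn_ord. Qed.

Lemma continuous_nth_coords n : continuous (fun x => nth 0 (coords x) n).
Proof.
rewrite /coords; elim: (enum I) n => [|i s IH] [|n] /=.
- exact: continuous_const.
- exact: continuous_const.
- exact: continuous_coord.
- exact: IH.
Qed.

Lemma continuous_eval (t : GRing.term R) :
  GRing.rterm t -> continuous (fun x => GRing.eval (coords x) t).
Proof.
elim: t => //=.
- by move=> n _; apply: continuous_nth_coords.
- by move=> c _; apply: continuous_const.
- by move=> n _; apply: continuous_const.
- by move=> t1 IH1 t2 IH2 /andP[/IH1 ? /IH2 ?]; apply: continuousD.
- by move=> t1 IH1 /IH1; apply: continuousN.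
- by move=> t1 IH1 n /IH1; apply: continuousMn.
- by move=> t1 IH1 t2 IH2 /andP[/IH1 ? /IH2 ?]; apply: continuousM.
- by move=> t1 IH1 n /IH1; apply: continuousX.
Qed.

Lemma qf_generically_constant (psi : ord.formula R) :
  ord.qf_form psi -> ord.rformula psi ->
  generically_constant (fun x => ord.holds (coords x) psi).
Proof.
have congr_and p q p' q' : (p <-> p') -> (q <-> q') -> (p /\ q <-> p' /\ q') by tauto.
have congr_or p q p' q' : (p <-> p') -> (q <-> q') -> (p \/ q <-> p' \/ q') by tauto.
have congr_imp p q p' q' : (p <-> p') -> (q <-> q') -> ((p -> q) <-> (p' -> q')) by tauto.
elim: psi => //=.
- by move=> b _ _; apply: generically_constant_const.
- move=> t1 t2 _ /andP[r1 r2].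
  apply: generically_constant_ext (generically_constantN (open_generically_constant
    (open_neq (continuous_eval r1) (continuous_eval r2)))) => x.
  by split=> [/NNPP | e]; last exact.
- move=> t1 t2 _ /andP[r1 r2].
  exact: open_generically_constant (open_lt (continuous_eval r1) (continuous_eval r2)).
- move=> t1 t2 _ /andP[r1 r2].
  apply: generically_constant_ext (generically_constantN (open_generically_constant
    (open_lt (continuous_eval r2) (continuous_eval r1)))) => x.
  by rewrite leNgt; split=> /negP.
- move=> f1 IH1 f2 IH2 /andP[q1 q2] /andP[r1 r2].
  exact: generically_constant2 congr_and (IH1 q1 r1) (IH2 q2 r2).
- move=> f1 IH1 f2 IH2 /andP[q1 q2] /andP[r1 r2].
  exact: generically_constant2 congr_or (IH1 q1 r1) (IH2 q2 r2).
- move=> f1 IH1 f2 IH2 /andP[q1 q2] /andP[r1 r2].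
  exact: generically_constant2 congr_imp (IH1 q1 r1) (IH2 q2 r2).
- by move=> f IH q r; apply: generically_constantN; apply: IH.
Qed.

End Semialgebraic.

Lemma semialgebraic_generically_constant (R : rcfType) (I : finType) (f : ord.formula R) :
  generically_constant (fun x : I -> R => ord.holds (coords x) f).
Proof.
have /andP[qf rf] := ord.quantifier_elim_wf (@wf_QE_wproj R) (ord.to_rform_rformula f).
apply: generically_constant_ext (qf_generically_constant qf rf) => x.
by split=> [/(ord.qf_evalP _ qf) /rcf_satP | /rcf_satP /(ord.qf_evalP _ qf)].
Qed.

Section FormulaEvaluation.
Variable R : realDomainType.
Implicit Types (e s : seq R) (f : ord.formula R).

Lemma holds_Exists_iota f e n m : size e = n ->
  ord.holds e (foldr (@ord.Exists R) f (iota n m)) <->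
  exists2 s, size s = m & ord.holds (e ++ s) f.
Proof.
have set_nth_size e' x : set_nth 0 e' (size e') x = rcons e' x by elim: e' => //= y e' ->.
elim: m e n => [|m IH] e n <- /=.
  by split=> [h | [s /size0nil -> //]]; [exists [::]; rewrite ?cats0 | rewrite cats0].
split=> [[x] | [[|x s] //= [ss] hs]].
  rewrite set_nth_size => /(IH _ _ (size_rcons e x)) [s ss hs].
  by exists (x :: s); [rewrite /= ss | rewrite -cat_rcons].
exists x; rewrite set_nth_size; apply/(IH _ _ (size_rcons e x)).
by exists s; rewrite ?cat_rcons.
Qed.

Lemma holds_big_And (J : finType) e (F : J -> ord.formula R) :
  ord.holds e (\big[@ord.And R/ord.Bool true]_j F j) <-> forall j, ord.holds e (F j).
Proof.
suff big_seq (s : seq J) : ord.holds e (\big[@ord.And R/ord.Bool true]_(j <- s) F j) <->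
    forall j, j \in s -> ord.holds e (F j).
  by rewrite big_seq; split=> h j => [|_]; apply: h; rewrite ?mem_index_enum.
elim: s => [|j s IH]; first by rewrite big_nil.
rewrite big_cons /= IH; split=> [[hj hs] i | h].
  by rewrite in_cons => /orP[/eqP -> | /hs].
by split=> [|i i_s]; apply: h; rewrite in_cons ?eqxx ?i_s ?orbT.
Qed.

Lemma eval_big_Add (J : finType) e (F : J -> GRing.term R) :
  GRing.eval e (\big[@GRing.Add R/GRing.Const 0]_j F j) = \sum_j GRing.eval e (F j).
Proof. exact: (big_morph (GRing.eval e) (op1 := +%R) (id1 := 0)). Qed.

End FormulaEvaluation.

Section GenericRank.
Variables (R : realFieldType) (I : finType) (rk : (I -> R) -> nat -> Prop).
Implicit Types (x y S : I -> R) (U W : (I -> R) -> Prop).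

Definition rank_is x q := rk x q /\ forall q', rk x q' -> (q' <= q)%N.

Definition typical_rank q :=
  exists W, [/\ open W, (exists x, W x) & forall x, W x -> rank_is x q].

Hypothesis rk0 : forall x, rk x 0.
Hypothesis rkS : forall x m, rk x m.+1 -> rk x m.
Hypothesis rk_ext : forall x y m, (forall i, x i = y i) -> rk x m -> rk y m.
Hypothesis rk_generic : forall m, generically_constant (rk^~ m).
Hypothesis rk_change :
  forall x y i0 m, (forall i, i != i0 -> x i = y i) -> rk x m.+1 -> rk y m.

Lemma rk_le x m m' : (m' <= m)%N -> rk x m -> rk x m'.
Proof.
move=> /subnK <-; elim: (m - m')%N => [|k IH]; rewrite ?add0n // addSn.
by move=> /rkS; apply: IH.
Qed.

Lemma rank_is_uniq x q q' : rank_is x q -> rank_is x q' -> q = q'.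
Proof. by move=> [hq mq] [hq' mq']; apply/eqP; rewrite eqn_leq mq' ?mq. Qed.

Lemma rank_is_ext x y q : (forall i, x i = y i) -> rank_is x q -> rank_is y q.
Proof.
move=> xy [hq mq]; split=> [|q' /rk_ext hq']; first exact: rk_ext hq.
by apply: mq; apply: hq' => i.
Qed.

Lemma typical_rank_translate S W q :
  open W -> (exists x, W x) -> (forall x, W x -> rank_is (translate S x) q) ->
  typical_rank q.
Proof.
move=> oW [x Wx] hW; exists (fun y => W (translate (fun i => - S i) y)); split.
- exact: open_translate.
- by exists (translate S x); apply: (open_ext oW Wx) => i; rewrite /translate addrK.
- by move=> y /hW; apply: rank_is_ext => i; rewrite /translate subrK.
Qed.

Lemma exists_generic_rank S K U : open U -> (exists x, U x) ->
  (forall x, U x -> ~ rk (translate S x) K) ->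
  exists W q, [/\ open W, (exists x, W x), (forall x, W x -> U x) &
                  forall x, W x -> rank_is (translate S x) q].
Proof.
elim: K U => [|K IH] U oU [x0 Ux0] noK; first by case: (noK x0 Ux0).
have [W [oW [x1 Wx1] WU cW]] :=
  generically_constant_translate S (rk_generic K) oU (ex_intro _ x0 Ux0).
have [rkK | nrkK] := classic (rk (translate S x1) K).
  exists W, K; split=> // [|x Wx]; first by exists x1.
  split=> [|q' rkq']; first by apply/(cW x1 x).
  rewrite leqNgt; apply/negP => Kq'.
  exact: noK x (WU x Wx) (rk_le Kq' rkq').
have noK' x : W x -> ~ rk (translate S x) K by move=> Wx /(cW x1 x Wx1 Wx).
have [|W' [q [oW' neW' W'W hW']]] := IH W oW _ noK'; first by exists x1.
by exists W', q; split=> // x /W'W /WU.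
Qed.

Lemma rank_path_step S S' i0 W q l :
  (forall i, i != i0 -> S i = S' i) -> ~ typical_rank l ->
  open W -> (exists x, W x) -> (forall x, W x -> rank_is (translate S x) q) -> (q < l)%N ->
  exists W' q', [/\ open W', (exists x, W' x), (forall x, W' x -> W x), (q' < l)%N &
                    forall x, W' x -> rank_is (translate S' x) q'].
Proof.
move=> SS' not_typical oW neW hW ql.
have agree x i : i != i0 -> translate S' x i = translate S x i.
  by move=> /SS' e; rewrite /translate e.
have bound x : W x -> ~ rk (translate S' x) q.+2.
  by move=> Wx /(rk_change (agree x)) /(hW x Wx).2; rewrite ltnn.
have [W' [q' [oW' [x' W'x'] W'W hW']]] := exists_generic_rank oW neW bound.
exists W', q'; split=> //; first by exists x'.
have q'_le : (q' <= q.+1)%N.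
  rewrite leqNgt; apply/negP => lt.
  exact: bound x' (W'W x' W'x') (rk_le lt (hW' x' W'x').1).
rewrite ltn_neqAle (leq_trans q'_le ql) andbT; apply/eqP => q'l; apply: not_typical.
by rewrite -q'l; apply: typical_rank_translate oW' _ hW'; exists x'.
Qed.

Definition prefix D j : I -> R := fun i => if (enum_rank i < j)%N then D i else 0.

Lemma prefix_succ D j (lt_j : (j < #|I|)%N) :
  forall i, i != enum_val (Ordinal lt_j) -> prefix D j i = prefix D j.+1 i.
Proof.
move=> i ne; rewrite /prefix [in X in _ = X]ltnS [in X in _ = X]leq_eqVlt.
case: eqP => //= e; suff ei : i = enum_val (Ordinal lt_j) by rewrite ei eqxx in ne.
by apply: enum_rank_inj; rewrite enum_valK; apply: val_inj.
Qed.

Theorem typical_rank_interval r s l :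
  typical_rank r -> typical_rank s -> (r <= l)%N -> (l <= s)%N -> typical_rank l.
Proof.
move=> [Wr [oWr [xr Wr_xr] hr]] [Ws [oWs [xs Ws_xs] hs]] rl ls.
apply: NNPP => not_typical.
pose D i := xs i - xr i.
pose U0 x := Wr x /\ Ws (translate D x).
have walk j : (j <= #|I|)%N -> exists W q,
    [/\ open W, (exists x, W x), (forall x, W x -> U0 x), (q < l)%N &
        forall x, W x -> rank_is (translate (prefix D j) x) q].
  elim: j => [_ | j IH lt_j].
    exists U0, r; split=> //.
    - exact: openI oWr (open_translate oWs).
    - exists xr; split=> //; apply: (open_ext oWs Ws_xs) => i.
      by rewrite /translate /D subrKC.
    - rewrite ltn_neqAle rl andbT; apply/eqP => rl'; apply: not_typical.
      by rewrite -rl'; exists Wr; split=> //; exists xr.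
    - move=> x [/hr hx _]; apply: rank_is_ext hx => i.
      by rewrite /translate /prefix ltn0 addr0.
  have [W [q [oW neW WU ql hW]]] := IH (ltnW lt_j).
  have [W' [q' [oW' neW' W'W q'l hW']]] :=
    rank_path_step (@prefix_succ D j lt_j) not_typical oW neW hW ql.
  by exists W', q'; split=> // x /W'W /WU.
have [W [q [_ [x Wx] WU ql hW]]] := walk #|I| (leqnn _).
have [_ /hs Ws_x] := WU x Wx.
have qs : q = s.
  apply: rank_is_uniq (hW x Wx) (rank_is_ext _ Ws_x) => i.
  by rewrite /translate /prefix ltn_ord.
by move: ql; rewrite qs ltnNge ls.
Qed.

End GenericRank.

Section TensorRestrictions.
Variables (R : realType) (n1 n2 n3 : nat).
Local Notation I3 := ('I_n1 * 'I_n2 * 'I_n3)%type.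

Definition tensor_of (x : I3 -> R) : tensor R n1 n2 n3 := fun i j k => x (i, j, k).

Definition entries (T : tensor R n1 n2 n3) : I3 -> R := fun p => T p.1.1 p.1.2 p.2.

Lemma tensor_mapE m1 m2 m3 (A1 : 'M[R]_(m1, n1)) (A2 : 'M[R]_(m2, n2))
    (A3 : 'M[R]_(m3, n3)) (T : tensor R n1 n2 n3) a b c :
  tensor_map A1 A2 A3 T a b c =
  \sum_(p : I3) A1 a p.1.1 * A2 b p.1.2 * A3 c p.2 * T p.1.1 p.1.2 p.2.
Proof. by rewrite /tensor_map pair_bigA pair_bigA. Qed.

Lemma tensor_map_rank_one_update m1 m2 m3 (A1 : 'M[R]_(m1, n1)) (A2 : 'M[R]_(m2, n2))
    (A3 : 'M[R]_(m3, n3)) (T : tensor R n1 n2 n3) u v w a b c :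
  tensor_map A1 A2 A3 (fun i j k => T i j k + u i * v j * w k) a b c =
  tensor_map A1 A2 A3 T a b c +
  (\sum_i A1 a i * u i) * (\sum_j A2 b j * v j) * (\sum_k A3 c k * w k).
Proof.
rewrite /tensor_map -mulrA big_distrlr /= mulr_suml -big_split /=; apply: eq_bigr => i _.
rewrite mulr_sumr -big_split /=; apply: eq_bigr => j _.
rewrite mulr_sumr -big_split /=; apply: eq_bigr => k _; ring.
Qed.

Lemma restricts_to_unit0 (T : tensor R n1 n2 n3) : restricts_to_unit T 0.
Proof. by exists 0, 0, 0 => -[]. Qed.

Lemma restricts_to_unit_ext (T T' : tensor R n1 n2 n3) m :
  (forall i j k, T i j k = T' i j k) -> restricts_to_unit T m -> restricts_to_unit T' m.
Proof.
move=> TT' [A1 [A2 [A3 hA]]]; exists A1, A2, A3 => a b c; rewrite -hA /tensor_map.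
by apply: eq_bigr => i _; apply: eq_bigr => j _; apply: eq_bigr => k _; rewrite TT'.
Qed.

Lemma restricts_to_unitS (T : tensor R n1 n2 n3) m :
  restricts_to_unit T m.+1 -> restricts_to_unit T m.
Proof.
case=> [A1 [A2 [A3 hA]]].
exists (\matrix_(a, i) A1 (widen_ord (leqnSn m) a) i).
exists (\matrix_(b, j) A2 (widen_ord (leqnSn m) b) j).
exists (\matrix_(c, k) A3 (widen_ord (leqnSn m) c) k).
move=> a b c; rewrite (_ : unit_tensor R a b c = unit_tensor R (widen_ord (leqnSn m) a)
  (widen_ord (leqnSn m) b) (widen_ord (leqnSn m) c)) // -hA !tensor_mapE.
by apply: eq_bigr => p _; rewrite !mxE.
Qed.

Lemma restricts_to_unit_rank_one_update (T : tensor R n1 n2 n3) u v w m :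
  restricts_to_unit T m.+1 ->
  restricts_to_unit (fun i j k => T i j k + u i * v j * w k) m.
Proof.
case=> [A1 [A2 [A3 hA]]].
pose alpha a := \sum_i A1 a i * u i.
have [p hp] : exists p, forall a, alpha a != 0 -> alpha p != 0.
  case: (pickP (fun a => alpha a != 0)) => [p /= ? | none]; first by exists p.
  by exists ord0 => a; rewrite none.
(* Row p absorbs the perturbation: removing lam a times it from row lift p a
   makes the new rows orthogonal to u. *)
pose lam a := alpha (lift p a) / alpha p.
have alpha_lift a : alpha (lift p a) = lam a * alpha p.
  have [z | nz] := eqVneq (alpha p) 0; last by rewrite /lam divfK.
  rewrite z mulr0; have [// | /hp] := eqVneq (alpha (lift p a)) 0.
  by rewrite z eqxx.
pose T' := fun i j k => T i j k + u i * v j * w k.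
have hT' a b c : tensor_map A1 A2 A3 T' a b c =
    unit_tensor R a b c + alpha a * (\sum_j A2 b j * v j) * (\sum_k A3 c k * w k).
  by rewrite tensor_map_rank_one_update hA.
exists (\matrix_(a, i) (A1 (lift p a) i - lam a * A1 p i)).
exists (\matrix_(b, j) A2 (lift p b) j).
exists (\matrix_(c, k) A3 (lift p c) k).
move=> a b c.
have -> : tensor_map (\matrix_(a, i) (A1 (lift p a) i - lam a * A1 p i))
    (\matrix_(b, j) A2 (lift p b) j) (\matrix_(c, k) A3 (lift p c) k) T' a b c =
    tensor_map A1 A2 A3 T' (lift p a) (lift p b) (lift p c) -
    lam a * tensor_map A1 A2 A3 T' p (lift p b) (lift p c).
  by rewrite !tensor_mapE mulr_sumr -sumrB; apply: eq_bigr => q _; rewrite !mxE; ring.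
rewrite !hT' alpha_lift.
have -> : unit_tensor R p (lift p b) (lift p c) = 0.
  by rewrite /unit_tensor (negbTE (neq_lift p b)).
have -> : unit_tensor R (lift p a) (lift p b) (lift p c) = unit_tensor R a b c.
  by rewrite /unit_tensor !(inj_eq (@lift_inj _ p)).
ring.
Qed.

Lemma restricts_to_unit_entry_change (x y : I3 -> R) p0 m :
  (forall p, p != p0 -> x p = y p) ->
  restricts_to_unit (tensor_of x) m.+1 -> restricts_to_unit (tensor_of y) m.
Proof.
case: p0 => [[i0 j0] k0] xy.
pose c := y (i0, j0, k0) - x (i0, j0, k0).
move=> /(restricts_to_unit_rank_one_update (fun i => (i == i0)%:R * c)
          (fun j => (j == j0)%:R) (fun k => (k == k0)%:R)).
apply: restricts_to_unit_ext => i j k; rewrite /tensor_of.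
have [[-> -> ->] | ne] := eqVneq (i, j, k) (i0, j0, k0).
  by rewrite !eqxx /= /c; ring.
rewrite -(xy _ ne) -[RHS]addr0; congr (_ + _); move: ne; rewrite !xpair_eqE.
by case: (i == i0); case: (j == j0); case: (k == k0) => //= _; rewrite ?(mul0r, mulr0).
Qed.

Definition mx_index m := (('I_m * 'I_n1 + 'I_m * 'I_n2) + 'I_m * 'I_n3)%type.

Definition entry_var (p : I3) : GRing.term R := GRing.Var R (enum_rank p).

Definition mx_var m (v : mx_index m) : GRing.term R :=
  GRing.Var R (#|{: I3}| + enum_rank v).

Definition restriction_term m (a b c : 'I_m) : GRing.term R :=
  \big[@GRing.Add R/GRing.Const 0]_(p : I3)
    (mx_var (inl (inl (a, p.1.1))) * mx_var (inl (inr (b, p.1.2))) *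
     mx_var (inr (c, p.2)) * entry_var p)%T.

(* Variables below #|I3| are the entries of the tensor, as laid out by [coords];
   the next #|mx_index m| variables are the entries of the three matrices. *)
Definition restriction_formula m : ord.formula R :=
  foldr (@ord.Exists R)
    (\big[@ord.And R/ord.Bool true]_(q : 'I_m * 'I_m * 'I_m)
       ord.Equal (restriction_term q.1.1 q.1.2 q.2)
                 (GRing.Const (unit_tensor R q.1.1 q.1.2 q.2)))
    (iota #|{: I3}| #|{: mx_index m}|).

Definition mx_of_seq m (s : seq R) : 'M_(m, n1) * 'M_(m, n2) * 'M_(m, n3) :=
  let z (v : mx_index m) := nth 0 s (enum_rank v) in
  (\matrix_(a, i) z (inl (inl (a, i))), \matrix_(b, j) z (inl (inr (b, j))),
   \matrix_(c, k) z (inr (c, k))).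

Lemma eval_restriction_term m (x : I3 -> R) s (a b c : 'I_m) :
  GRing.eval (coords x ++ s) (restriction_term a b c) =
  tensor_map (mx_of_seq m s).1.1 (mx_of_seq m s).1.2 (mx_of_seq m s).2 (tensor_of x) a b c.
Proof.
rewrite eval_big_Add tensor_mapE; apply: eq_bigr => -[[i j] k] _ /=.
rewrite !mxE /tensor_of !nth_cat size_coords ltn_ord !ltnNge !leq_addr /=.
by rewrite !addKn nth_coords.
Qed.

Lemma restricts_to_unitP m (x : I3 -> R) :
  restricts_to_unit (tensor_of x) m <-> ord.holds (coords x) (restriction_formula m).
Proof.
rewrite /restriction_formula (holds_Exists_iota _ _ (size_coords x)).
split=> [[A1 [A2 [A3 hA]]] | [s _ /holds_big_And hs]].
  pose z (v : mx_index m) := match v with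
    | inl (inl (a, i)) => A1 a i | inl (inr (b, j)) => A2 b j | inr (c, k) => A3 c k end.
  exists (coords z); first by rewrite size_coords.
  apply/holds_big_And => -[[a b] c] /=; rewrite eval_restriction_term -hA.
  rewrite /tensor_map; apply: eq_bigr => i _; apply: eq_bigr => j _; apply: eq_bigr => k _.
  by rewrite !mxE !nth_coords.
exists (mx_of_seq m s).1.1, (mx_of_seq m s).1.2, (mx_of_seq m s).2 => a b c.
by have := hs (a, b, c); rewrite /= eval_restriction_term.
Qed.

Lemma restricts_generically_constant m :
  generically_constant (fun x : I3 -> R => restricts_to_unit (tensor_of x) m).
Proof.
have := @semialgebraic_generically_constant R I3 (restriction_formula m).
by apply: generically_constant_ext => x; apply: iff_sym (restricts_to_unitP m x).
Qed.

Lemma tensor_dist2E (x y : I3 -> R) :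
  tensor_dist2 (tensor_of x) (tensor_of y) = sqdist x y.
Proof. by rewrite /tensor_dist2 pair_bigA pair_bigA; apply: eq_bigr => -[[i j] k]. Qed.

Lemma typical_subrankE q :
  typical_subrank R n1 n2 n3 q <->
  typical_rank (fun (x : I3 -> R) m => restricts_to_unit (tensor_of x) m) q.
Proof.
split=> [[T0 [eps [eps0 hT0]]] | [W [oW [x0 Wx0] hW]]].
  exists (fun x => sqdist x (entries T0) < eps ^+ 2); split.
  - exact: open_lt (continuous_sqdist _) (continuous_const _).
  - exists (entries T0); rewrite /sqdist big1 => [|p _]; last by rewrite subrr expr0n.
    exact: exprn_gt0.
  - by move=> x; rewrite -tensor_dist2E; apply: hT0.
have [d d0 hd] := oW x0 Wx0.
exists (tensor_of x0), d; split=> // T dT; apply: (hW (entries T)); apply: hd => p.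
have : (entries T p - x0 p) ^+ 2 < d ^+ 2.
  by apply: le_lt_trans (sqr_le_sqdist _ _ p) _; rewrite -tensor_dist2E.
by rewrite -real_normK ?num_real // ltr_pXn2r ?nnegrE ?normr_ge0 ?(ltW d0).
Qed.

End TensorRestrictions.

Theorem theorem1p7 (R : realType) (n1 n2 n3 r s l : nat) :
  typical_subrank R n1 n2 n3 r -> typical_subrank R n1 n2 n3 s -> (r <= s)%N ->
  (r <= l)%N -> (l <= s)%N -> typical_subrank R n1 n2 n3 l.
Proof.
move=> /typical_subrankE typ_r /typical_subrankE typ_s _ rl ls; apply/typical_subrankE.
apply: typical_rank_interval typ_r typ_s rl ls.
- by move=> x; apply: restricts_to_unit0.
- by move=> x m; apply: restricts_to_unitS.
- by move=> x y m xy; apply: restricts_to_unit_ext => i j k; apply: xy.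
- exact: restricts_generically_constant.
- by move=> x y p m; apply: restricts_to_unit_entry_change.
Qed.
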